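(* There is an absolute constant $C>0$ such that for every integer $N\ge1$, every $k\in\Lambda_N$, every signed face $f$ and every dyadic scale $1\le H\le N$, \[ \#\{r\in\mathcal R_N: A_{r,f,H}(k)\neq\varnothing\}\le C N^2 H . \]
   Context: For an integer $N\ge1$, $\Lambda_N:=\{k\in\mathbb Z^3\setminus\{0\}:|k|_\infty\le N\}$, $|\cdot|$ is the Euclidean norm, $\mathcal R_N:=\{|k|^2:k\in\Lambda_N\}$. For $k\in\Lambda_N$, $A_r(k):=\{p\in\Lambda_N:|p|^2=r,\ k-p\in\Lambda_N\}$, contained in $B(k):=\prod_{j=1}^3[k_j-N,k_j+N]\cap\mathbb Z^3$. Signed faces are $f=(j,\sigma)$, $j\in\{1,2,3\}$, $\sigma\in\{\pm1\}$, ordered lexicographically. For $p\in B(k)$: $h_f(p,k):=k_j+N-p_j$ if $\sigma=+1$, $h_f(p,k):=p_j-(k_j-N)$ if $\sigma=-1$; $h_{\min}:=\min_f h_f$; $f(p)$ is the lexicographically first minimizing face; $H(p):=1$ if $h_{\min}=0$, else the power of $2$ with $H(p)\le h_{\min}<2H(p)$. For dyadic $H$ (a power of $2$), $A_{r,f,H}(k):=\{p\in A_r(k):f(p)=f,\ H(p)=H\}$. *)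

From mathcomp Require Import all_boot all_order all_algebra.
Set Implicit Arguments. Unset Strict Implicit. Unset Printing Implicit Defensive.
Import Order.TTheory GRing.Theory Num.Theory.
Local Open Scope ring_scope.

Definition pt := (int * int * int)%type.

Definition coord (p : pt) (j : 'I_3) : int :=
  match val j with 0%N => p.1.1 | 1%N => p.1.2 | _ => p.2 end.

Definition psub (k p : pt) : pt := (k.1.1 - p.1.1, k.1.2 - p.1.2, k.2 - p.2).

Definition inLam (N : nat) (p : pt) : bool :=
  (p != (0, 0, 0)) && [forall j : 'I_3, `|coord p j| <= N%:Z].

Definition sqn (p : pt) : nat := (`|p.1.1| ^ 2 + `|p.1.2| ^ 2 + `|p.2| ^ 2)%N.

Definition rng (N : nat) : seq int := [seq (i%:Z - N%:Z) | i <- iota 0 (2 * N).+1].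
Definition box (N : nat) : seq pt :=
  [seq (ab, c) | ab <- [seq (a, b) | a <- rng N, b <- rng N], c <- rng N].
Definition Lam (N : nat) : seq pt := [seq p <- box N | inLam N p].

Definition RN (N : nat) : seq nat := undup [seq sqn p | p <- Lam N].

Definition Ar (N r : nat) (k : pt) : seq pt :=
  [seq p <- Lam N | (sqn p == r) && inLam N (psub k p)].

(* Signed faces (j, sigma), sigma = true for +1 and false for -1. *)
Definition face := ('I_3 * bool)%type.

Definition faces : seq face :=
  [:: (0 : 'I_3, false); (0 : 'I_3, true); (1 : 'I_3, false); (1 : 'I_3, true);
      (2 : 'I_3, false); (2 : 'I_3, true)].

Definition hf (N : nat) (f : face) (p k : pt) : int :=
  if f.2 then coord k f.1 + N%:Z - coord p f.1
  else coord p f.1 - (coord k f.1 - N%:Z).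

Definition hmin (N : nat) (p k : pt) : int :=
  \big[Order.min/hf N (0 : 'I_3, false) p k]_(f <- faces) hf N f p k.

Definition fp (N : nat) (p k : pt) : face :=
  nth (0 : 'I_3, false) faces (find (fun f => hf N f p k == hmin N p k) faces).

Definition Hp (N : nat) (p k : pt) : nat :=
  if hmin N p k == 0 then 1%N else (2 ^ trunc_log 2 `|hmin N p k|)%N.

Definition ArfH (N r : nat) (f : face) (H : nat) (k : pt) : seq pt :=
  [seq p <- Ar N r k | (fp N p k == f) && (Hp N p k == H)].

Definition countR (N : nat) (k : pt) (f : face) (H : nat) : nat :=
  size [seq r <- RN N | ArfH N r f H k != [::]].

From Pilot Require Import Defs.
From mathcomp Require Import all_boot all_order all_algebra.
From mathcomp Require Import zify.
Set Implicit Arguments. Unset Strict Implicit. Unset Printing Implicit Defensive.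
Import Order.TTheory GRing.Theory Num.Theory.
Local Open Scope ring_scope.

(* A point p of A_{r,f,H}(k) has height h_f(p,k) = h_min(p,k) of size less
   than 2H on its face f = (j, sigma), so its j-th coordinate lies in a window
   of O(H) integers determined by k, while its other two coordinates lie in
   [-N, N].  Hence every r with A_{r,f,H}(k) nonempty is |p|^2 for some p in a
   slab of O(N^2 H) lattice points. *)

Lemma mem_rng (M : nat) (x : int) : `|x| <= M%:Z -> x \in rng M.
Proof.
move=> le_xM; apply/mapP; exists (absz (x + M%:Z)); last by lia.
by rewrite mem_iota /=; lia.
Qed.

Lemma size_rng (M : nat) : size (rng M) = (2 * M).+1%N.
Proof. by rewrite size_map size_iota. Qed.

Lemma bigmin_mem disp (T : orderType disp) (I : eqType) (s : seq I)
    (x0 : T) (F : I -> T) :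
  \big[Order.min/x0]_(i <- s) F i \in x0 :: map F s.
Proof.
rewrite big_seq; apply: (big_ind (fun y => y \in x0 :: map F s)) => [|x y x_in y_in|i i_s].
- exact: mem_head.
- by rewrite minEle; case: ifP.
- by rewrite inE map_f ?orbT.
Qed.

Lemma hf_fp N p k : hf N (fp N p k) p k = hmin N p k.
Proof.
apply/eqP; apply: (nth_find _ (a := fun f => hf N f p k == hmin N p k)).
apply/hasP; have := bigmin_mem faces (hf N (0 : 'I_3, false) p k) (fun f => hf N f p k).
rewrite -/(hmin N p k) inE => /orP[/eqP E|/mapP[f f_in E]].
- by exists (0 : 'I_3, false); rewrite ?mem_head -?E.
- by exists f; rewrite -?E.
Qed.

Lemma hmin_lt_2Hp N p k : (`|hmin N p k| < 2 * Hp N p k)%N.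
Proof.
rewrite /Hp; case: eqP => [-> //|_].
by rewrite -expnS; apply: trunc_log_ltn.
Qed.

Definition insert_coord (j : 'I_3) (a : int) (bc : int * int) : pt :=
  match val j with
  | 0%N => (a, bc.1, bc.2)
  | 1%N => (bc.1, a, bc.2)
  | _ => (bc.1, bc.2, a)
  end.

Definition slab (j : 'I_3) (W : seq int) (M : nat) : seq pt :=
  [seq insert_coord j a bc | a <- W, bc <- [seq (b, c) | b <- rng M, c <- rng M]].

Lemma size_slab j W M : size (slab j W M) = (size W * (2 * M).+1 ^ 2)%N.
Proof. by rewrite !size_allpairs !size_rng. Qed.

Lemma mem_slab j W M p :
  Defs.coord p j \in W -> (forall i, `|Defs.coord p i| <= M%:Z) -> p \in slab j W M.
Proof.
case: p => [[x y] z] a_in le_M.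
have le_x := le_M 0; have le_y := le_M 1; have le_z := le_M 2.
rewrite /Defs.coord /= in le_x le_y le_z.
have mem_pairs b c : `|b| <= M%:Z -> `|c| <= M%:Z ->
    (b, c) \in [seq (b, c) | b <- rng M, c <- rng M].
  by move=> le_b le_c; apply: allpairs_f; apply: mem_rng.
case: j a_in => [[|[|[|//]]] lt_j] a_in.
- exact: (allpairs_f (fun a bc => insert_coord _ a bc) a_in (mem_pairs _ _ le_y le_z)).
- exact: (allpairs_f (fun a bc => insert_coord _ a bc) a_in (mem_pairs _ _ le_x le_z)).
- exact: (allpairs_f (fun a bc => insert_coord _ a bc) a_in (mem_pairs _ _ le_x le_y)).
Qed.

Definition coord_at_height (N : nat) (f : face) (k : pt) (h : int) : int :=
  if f.2 then Defs.coord k f.1 + N%:Z - h else h + (Defs.coord k f.1 - N%:Z).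

Lemma coord_at_height_hf N f p k : coord_at_height N f k (hf N f p k) = Defs.coord p f.1.
Proof. by rewrite /coord_at_height /hf; case: f.2; lia. Qed.

Definition face_window (N H : nat) (f : face) (k : pt) : seq int :=
  [seq coord_at_height N f k h | h <- rng (2 * H)].

Lemma ArfH_sub_slab N r f H k :
  {subset ArfH N r f H k <= slab f.1 (face_window N H f k) N}.
Proof.
move=> p; rewrite !mem_filter => /andP[/andP[/eqP fp_f /eqP Hp_H]].
move=> /andP[_ /andP[/andP[_ /forallP le_N] _]].
apply: mem_slab le_N; rewrite -(coord_at_height_hf N f p k); apply: map_f; apply: mem_rng.
by have := hmin_lt_2Hp N p k; rewrite -fp_f hf_fp Hp_H; lia.
Qed.

Lemma countR_le_size_slab N k f H :
  (countR N k f H <= size (slab f.1 (face_window N H f k) N))%N.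
Proof.
rewrite -(size_map sqn); apply: uniq_leq_size; first by rewrite filter_uniq ?undup_uniq.
move=> r; rewrite mem_filter => /andP[].
case A_r: (ArfH N r f H k) => [//|p ps] _ _.
have p_in : p \in ArfH N r f H k by rewrite A_r mem_head.
have /eqP <- : sqn p == r by move: p_in; rewrite !mem_filter => /andP[_ /andP[/andP[]]].
by rewrite map_f // (ArfH_sub_slab p_in).
Qed.

Theorem lemma4p7 :
  exists C : nat, (0 < C)%N /\
    forall (N : nat) (k : pt) (f : face) (m : nat),
      (1 <= N)%N -> inLam N k -> (2 ^ m <= N)%N ->
      (countR N k f (2 ^ m) <= C * N ^ 2 * 2 ^ m)%N.
Proof.
exists 45%N; split => // N k f m N_gt0 _ _.
apply: leq_trans (countR_le_size_slab N k f (2 ^ m)) _.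
rewrite size_slab size_map size_rng.
have : (0 < 2 ^ m)%N by rewrite expn_gt0.
(* (4H + 1)(2N + 1)^2 <= 5H * 9N^2 *)
move: N_gt0; set H := (2 ^ m)%N; nia.
Qed.
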